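(* Let $n \ge 1$ and let $A$ be a simple cusp algebra of codimension $n+1$. Then $A$ has a primitive $\pi$ such that the Taylor coefficients satisfy $\hat{\pi}(2k) = 0$ for all $2 \le k \le n$. Moreover, such $\pi$ is unique up to $O(z^{2n+2})$: if $\pi$ and $\chi$ are two primitives of $A$ with $\hat\pi(2k) = \hat\chi(2k) = 0$ for all $2 \le k \le n$, then $\chi - \pi \in z^{2n+2} O(\mathbb{D})$.
   Context: $\mathbb{D}$ is the open unit disk, $O(\mathbb{D})$ the holomorphic functions on it; $\hat f(k)$ denotes the $k$-th Taylor coefficient of $f$ at $0$. A cusp algebra is a unital subalgebra $A \subseteq O(\mathbb{D})$ with $\dim(O(\mathbb{D})/A) < \infty$ and $z^m O(\mathbb{D}) \subseteq A$ for some $m \ge 2$; its codimension is $\dim(O(\mathbb{D})/A)$. Its contact is $\max\{n : f^{(j)}(0)=0\ \forall f\in A,\ 1\le j\le n\}$, and $A$ is simple if its contact is $1$. A primitive for a simple cusp algebra $A$ is a function $\pi \in A$ with $\pi(0)=0$ and $\pi''(0)=2$. *)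

From Stdlib Require Import Reals Arith.
Open Scope R_scope.

Definition Cplx : Type := (R * R)%type.
Definition C0 : Cplx := (0, 0).
Definition C1 : Cplx := (1, 0).
Definition Cadd (x y : Cplx) : Cplx := (fst x + fst y, snd x + snd y).
Definition Copp (x : Cplx) : Cplx := (- fst x, - snd x).
Definition Cmul (x y : Cplx) : Cplx :=
  (fst x * fst y - snd x * snd y, fst x * snd y + snd x * fst y).
Definition Cnorm (x : Cplx) : R := sqrt (fst x * fst x + snd x * snd x).
Definition RtoC (r : R) : Cplx := (r, 0).

Fixpoint Csum (n : nat) (f : nat -> Cplx) : Cplx :=
  match n with
  | O => C0
  | S m => Cadd (Csum m f) (f m)
  end.

(* A function on the disk, given by its Taylor coefficients at 0:
   f = sum_k (f k) z^k, i.e. f k = \hat f(k). *)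
Definition series : Type := nat -> Cplx.

(* The power series has radius of convergence >= 1, i.e. it defines an
   element of O(D); this identifies O(D) with such sequences. *)
Definition holo (f : series) : Prop :=
  forall r : R, 0 <= r < 1 ->
    exists M : R, forall k : nat, Cnorm (f k) * r ^ k <= M.

Definition sone : series := fun k => match k with O => C1 | _ => C0 end.
Definition sadd (f g : series) : series := fun k => Cadd (f k) (g k).
Definition ssub (f g : series) : series := fun k => Cadd (f k) (Copp (g k)).
Definition sscal (c : Cplx) (f : series) : series := fun k => Cmul c (f k).
Definition smul (f g : series) : series :=
  fun k => Csum (S k) (fun j => Cmul (f j) (g (k - j)%nat)).
Definition zpow_mul (m : nat) (h : series) : series :=
  fun k => if Nat.ltb k m then C0 else h (k - m)%nat.
Definition lincomb (d : nat) (c : nat -> Cplx) (g : nat -> series) : series :=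
  fun k => Csum d (fun i => Cmul (c i) (g i k)).

Definition deriv0 (f : series) (j : nat) : Cplx := Cmul (RtoC (INR (fact j))) (f j).

Definition unital_subalgebra (A : series -> Prop) : Prop :=
  (forall f, A f -> holo f) /\
  A sone /\
  (forall f g, A f -> A g -> A (sadd f g)) /\
  (forall c f, A f -> A (sscal c f)) /\
  (forall f g, A f -> A g -> A (smul f g)).

(* dim (O(D)/A) = d : there are g_0,...,g_{d-1} in O(D) whose classes form a
   basis of the quotient O(D)/A. *)
Definition has_codim (A : series -> Prop) (d : nat) : Prop :=
  exists g : nat -> series,
    (forall i, (i < d)%nat -> holo (g i)) /\
    (forall f, holo f -> exists c : nat -> Cplx, A (ssub f (lincomb d c g))) /\
    (forall c : nat -> Cplx, A (lincomb d c g) -> forall i, (i < d)%nat -> c i = C0).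

Definition finite_codim (A : series -> Prop) : Prop := exists d, has_codim A d.

Definition cusp_algebra (A : series -> Prop) : Prop :=
  unital_subalgebra A /\ finite_codim A /\
  exists m : nat, (2 <= m)%nat /\ forall h, holo h -> A (zpow_mul m h).

Definition contact_cond (A : series -> Prop) (n : nat) : Prop :=
  forall f, A f -> forall j, (1 <= j <= n)%nat -> deriv0 f j = C0.
Definition has_contact (A : series -> Prop) (c : nat) : Prop :=
  contact_cond A c /\ forall n, contact_cond A n -> (n <= c)%nat.
Definition is_simple (A : series -> Prop) : Prop := has_contact A 1.

Definition is_primitive (A : series -> Prop) (p : series) : Prop :=
  A p /\ p 0%nat = C0 /\ deriv0 p 2 = RtoC 2.

(* Normalise a primitive to pi = z^2 + O(z^3).  The powers pi^a have every
   even order 2a, so the even Taylor coefficients of a primitive can be killed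
   one at a time by subtracting multiples of pi^k.

   For uniqueness, chi - pi lies in A and its even coefficients below 2n+2
   vanish by hypothesis.  If its first nonzero coefficient had odd index
   2j+1 <= 2n+1, then the products pi^a (chi - pi) together with the powers
   pi^a would give elements of A of every order except 1, 3, ..., 2j-1.
   Cancelling coefficients one at a time against these (the remaining tail
   lies in z^m O(D), which is contained in A), every holomorphic function is
   congruent modulo A to a combination of z, z^3, ..., z^(2j-1); so A would
   have codimension at most j <= n. *)

From Pilot Require Import Defs.
From Stdlib Require Import Reals Lra Lia List Classical FunctionalExtensionality
  IndefiniteDescription.
From Coquelicot Require Complex.
Open Scope R_scope.
Local Notation C1 := Defs.C1.

Definition Cinv : Cplx -> Cplx := Complex.Cinv.

Definition Cfield : field_theory C0 C1 Cadd Cmul (fun x y => Cadd x (Copp y)) Copp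
  (fun x y => Cmul x (Cinv y)) Cinv (@eq Cplx) := Complex.C_field_theory.
Add Field Cfield : Cfield.

Lemma Cinv_l (x : Cplx) : x <> C0 -> Cmul (Cinv x) x = C1.
Proof. intros Hx. field. exact Hx. Qed.

Lemma Cmul_neq0 (x y : Cplx) : x <> C0 -> y <> C0 -> Cmul x y <> C0.
Proof.
  intros Hx Hy Hxy. apply Hy.
  replace y with (Cmul (Cinv x) (Cmul x y)) by (field; exact Hx).
  rewrite Hxy. ring.
Qed.

Lemma C1_neq_C0 : C1 <> C0.
Proof. intros E. injection E. lra. Qed.

Lemma Cnorm_Cmod (x : Cplx) : Cnorm x = Complex.Cmod x.
Proof. destruct x. unfold Cnorm, Complex.Cmod. simpl. f_equal. ring. Qed.

Lemma Cnorm_ge0 (x : Cplx) : 0 <= Cnorm x.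
Proof. apply sqrt_pos. Qed.

Lemma Cnorm_triangle (x y : Cplx) : Cnorm (Cadd x y) <= Cnorm x + Cnorm y.
Proof. rewrite !Cnorm_Cmod. apply Complex.Cmod_triangle. Qed.

Lemma Cnorm_opp (x : Cplx) : Cnorm (Copp x) = Cnorm x.
Proof. rewrite !Cnorm_Cmod. apply Complex.Cmod_opp. Qed.

Lemma Cnorm_C0 : Cnorm C0 = 0.
Proof. rewrite Cnorm_Cmod. apply Complex.Cmod_0. Qed.

Lemma Csum_ext (n : nat) (F G : nat -> Cplx) :
  (forall i, (i < n)%nat -> F i = G i) -> Csum n F = Csum n G.
Proof.
  induction n as [|n IH]; intros H; [reflexivity|]. simpl.
  rewrite IH by (intros i Hi; apply H; lia). rewrite H by lia. reflexivity.
Qed.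

Lemma Csum_eq0 (n : nat) (F : nat -> Cplx) :
  (forall i, (i < n)%nat -> F i = C0) -> Csum n F = C0.
Proof.
  induction n as [|n IH]; intros H; [reflexivity|]. simpl.
  rewrite IH by (intros i Hi; apply H; lia). rewrite H by lia. ring.
Qed.

Lemma Csum_add (n : nat) (F G : nat -> Cplx) :
  Csum n (fun i => Cadd (F i) (G i)) = Cadd (Csum n F) (Csum n G).
Proof. induction n as [|n IH]; simpl; [ring|]. rewrite IH. ring. Qed.

Lemma Csum_scal (n : nat) (c : Cplx) (F : nat -> Cplx) :
  Csum n (fun i => Cmul c (F i)) = Cmul c (Csum n F).
Proof. induction n as [|n IH]; simpl; [ring|]. rewrite IH. ring. Qed.

Lemma Csum_single (n : nat) (F : nat -> Cplx) (i0 : nat) : (i0 < n)%nat ->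
  (forall i, (i < n)%nat -> i <> i0 -> F i = C0) -> Csum n F = F i0.
Proof.
  induction n as [|n IH]; intros Hi0 H; [lia|]. simpl.
  destruct (Nat.eq_dec i0 n) as [->|Hne].
  - rewrite Csum_eq0 by (intros i Hi; apply H; lia). ring.
  - rewrite IH; [rewrite (H n) by lia; ring | lia | intros i Hi Hi'; apply H; lia].
Qed.

Lemma Csum_swap (n m : nat) (F : nat -> nat -> Cplx) :
  Csum n (fun i => Csum m (fun l => F i l)) = Csum m (fun l => Csum n (fun i => F i l)).
Proof.
  induction n as [|n IH]; simpl.
  - symmetry. apply Csum_eq0. reflexivity.
  - rewrite IH, <- Csum_add. reflexivity.
Qed.

Lemma homogeneous_system_nontrivial (m : nat) (eqs : list (nat -> Cplx)) :
  (length eqs < m)%nat ->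
  exists c : nat -> Cplx, (exists i, (i < m)%nat /\ c i <> C0) /\
    forall e, In e eqs -> Csum m (fun i => Cmul (c i) (e i)) = C0.
Proof.
  revert eqs. induction m as [|m IH]; intros eqs Hlen; [lia|].
  destruct (classic (forall e, In e eqs -> e m = C0)) as [Hlast|Hpivot].
  - exists (fun i => if Nat.eqb i m then C1 else C0). split.
    + exists m. rewrite Nat.eqb_refl. split; [lia | exact C1_neq_C0].
    + intros e He. simpl. rewrite Nat.eqb_refl, (Hlast e He), Csum_eq0; [ring|].
      intros i Hi. destruct (Nat.eqb_spec i m); [lia | ring].
  - apply not_all_ex_not in Hpivot as [e0 Hpivot].
    apply imply_to_and in Hpivot as [He0 Hpivot].
    apply in_split in He0 as [l1 [l2 ->]].
    (* eliminate the last unknown using the pivot equation [e0] *)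
    set (elim e i := Cadd (Cmul (e0 m) (e i)) (Copp (Cmul (e m) (e0 i)))).
    destruct (IH (map elim (l1 ++ l2))) as [c [[i1 [Hi1 Hc1]] Hc]].
    { rewrite length_map, length_app. rewrite length_app in Hlen. simpl in Hlen. lia. }
    exists (fun i => if Nat.eqb i m then Copp (Csum m (fun i => Cmul (c i) (e0 i)))
                else Cmul (e0 m) (c i)).
    split.
    + exists i1. split; [lia|]. destruct (Nat.eqb_spec i1 m); [lia|].
      apply Cmul_neq0; assumption.
    + assert (Hsum : forall e, Csum (S m) (fun i => Cmul
          (if Nat.eqb i m then Copp (Csum m (fun i => Cmul (c i) (e0 i)))
           else Cmul (e0 m) (c i)) (e i)) = Csum m (fun i => Cmul (c i) (elim e i))).
      { intros e. simpl. rewrite Nat.eqb_refl.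
        rewrite (Csum_ext m _ (fun i => Cmul (e0 m) (Cmul (c i) (e i)))).
        2:{ intros i Hi. destruct (Nat.eqb_spec i m); [lia | ring]. }
        rewrite (Csum_ext m (fun i => Cmul (c i) (elim e i)) (fun i => Cadd
          (Cmul (e0 m) (Cmul (c i) (e i))) (Cmul (Copp (e m)) (Cmul (c i) (e0 i))))).
        2:{ intros i _. unfold elim. ring. }
        rewrite Csum_add, !Csum_scal. ring. }
      intros e He. rewrite Hsum.
      apply in_app_iff in He as [He|[<-|He]].
      * apply Hc, in_map, in_or_app. left; exact He.
      * apply Csum_eq0. intros i _. unfold elim. ring.
      * apply Hc, in_map, in_or_app. right; exact He.
Qed.

(** * Orders of vanishing *)

Definition vanishes_below (f : series) (t : nat) : Prop :=
  forall i, (i < t)%nat -> f i = C0.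

Definition monic_of_order (f : series) (t : nat) : Prop :=
  vanishes_below f t /\ f t = C1.

Lemma vanishes_below_ind (f : series) (N : nat) :
  (forall i, (i < N)%nat -> vanishes_below f i -> f i = C0) -> vanishes_below f N.
Proof.
  induction N as [|N IH]; intros H i Hi; [lia|].
  assert (HN : vanishes_below f N) by (apply IH; intros; apply H; [lia | assumption]).
  destruct (Nat.lt_ge_cases i N) as [Hlt|Hge]; [exact (HN i Hlt)|].
  replace i with N by lia. apply H; [lia | exact HN].
Qed.

Lemma vanishes_below_cancel (r w s : series) (t : nat) :
  vanishes_below r t -> monic_of_order w t ->
  (forall k, s k = Cadd (r k) (Copp (Cmul (r t) (w k)))) -> vanishes_below s (S t).
Proof.
  intros Hr [Hw Hw1] Hs i Hi. rewrite Hs.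
  destruct (Nat.lt_ge_cases i t) as [Hlt|Hge].
  - rewrite Hr, Hw by exact Hlt. ring.
  - replace i with t by lia. rewrite Hw1. ring.
Qed.

Lemma smul_monic (f g : series) (s t : nat) :
  monic_of_order f s -> monic_of_order g t -> monic_of_order (smul f g) (s + t).
Proof.
  intros [Hf Hf1] [Hg Hg1].
  assert (Hterm : forall k i, (i <= k <= s + t)%nat -> (k < s + t \/ i <> s)%nat ->
            Cmul (f i) (g (k - i)%nat) = C0).
  { intros k i Hik Hcase. destruct (Nat.lt_ge_cases i s).
    - rewrite Hf by assumption. ring.
    - rewrite (Hg (k - i)%nat) by lia. ring. }
  split.
  - intros k Hk. apply Csum_eq0. intros i Hi. apply Hterm; lia.
  - unfold smul. rewrite (Csum_single _ _ s) by (try intros; try apply Hterm; lia).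
    replace (s + t - s)%nat with t by lia. rewrite Hf1, Hg1. ring.
Qed.

Fixpoint spow (f : series) (a : nat) : series :=
  match a with O => sone | S a' => smul f (spow f a') end.

Lemma spow_monic (f : series) (s a : nat) :
  monic_of_order f s -> monic_of_order (spow f a) (s * a).
Proof.
  intros Hf. induction a as [|a IH].
  - rewrite Nat.mul_0_r. split; [intros i Hi; lia | reflexivity].
  - replace (s * S a)%nat with (s + s * a)%nat by lia. exact (smul_monic _ _ _ _ Hf IH).
Qed.

Definition monomial (t : nat) : series := fun k => if Nat.eqb k t then C1 else C0.

Definition odd_monomial (l : nat) : series := monomial (2 * l + 1).

Lemma monomial_monic (t : nat) : monic_of_order (monomial t) t.
Proof.
  split; unfold monomial; [|now rewrite Nat.eqb_refl].
  intros i Hi. destruct (Nat.eqb_spec i t); [lia | reflexivity].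
Qed.

Lemma lincomb_update (d : nat) (c : nat -> Cplx) (b : nat -> series) (l : nat) (r : Cplx) :
  (l < d)%nat ->
  lincomb d (fun x => if Nat.eqb x l then Cadd (c l) r else c x) b
  = sadd (lincomb d c b) (sscal r (b l)).
Proof.
  intros Hl. apply functional_extensionality. intros k. unfold lincomb, sadd, sscal.
  rewrite (Csum_ext d _ (fun i => Cadd (Cmul (c i) (b i k))
                                   (if Nat.eqb i l then Cmul r (b i k) else C0))).
  - rewrite Csum_add,
      (Csum_single d (fun i => if Nat.eqb i l then Cmul r (b i k) else C0) l Hl).
    + rewrite Nat.eqb_refl. reflexivity.
    + intros i _ Hi. destruct (Nat.eqb_spec i l); [contradiction | reflexivity].
  - intros i _. destruct (Nat.eqb_spec i l) as [->|]; ring.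
Qed.

(** * Holomorphy *)

Lemma holo_dominated (f g h : series) : holo f -> holo g ->
  (forall k, Cnorm (h k) <= Cnorm (f k) + Cnorm (g k)) -> holo h.
Proof.
  intros Hf Hg Hh r Hr.
  destruct (Hf r Hr) as [M1 H1], (Hg r Hr) as [M2 H2].
  exists (M1 + M2). intros k.
  specialize (H1 k). specialize (H2 k). pose proof (pow_le r k ltac:(lra)).
  apply Rle_trans with ((Cnorm (f k) + Cnorm (g k)) * r ^ k); [|lra].
  apply Rmult_le_compat_r; [assumption | apply Hh].
Qed.

Lemma holo_sadd (f g : series) : holo f -> holo g -> holo (sadd f g).
Proof. intros Hf Hg. apply (holo_dominated f g); [assumption.. |]. intros k. apply Cnorm_triangle. Qed.

Lemma holo_ssub (f g : series) : holo f -> holo g -> holo (ssub f g).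
Proof.
  intros Hf Hg. apply (holo_dominated f g); [assumption.. |].
  intros k. rewrite <- (Cnorm_opp (g k)). apply Cnorm_triangle.
Qed.

Lemma finite_upper_bound (u : nat -> R) (N : nat) :
  exists M, 0 <= M /\ forall k, (k < N)%nat -> u k <= M.
Proof.
  induction N as [|N [M [HM0 HM]]]; [exists 0; split; [lra | intros; lia]|].
  exists (Rmax M (u N)). split; [apply (Rle_trans _ M); [assumption | apply Rmax_l]|].
  intros k Hk. destruct (Nat.lt_ge_cases k N).
  - apply Rle_trans with M; [auto | apply Rmax_l].
  - replace k with N by lia. apply Rmax_r.
Qed.

Lemma holo_of_finite_support (f : series) (N : nat) :
  (forall k, (N <= k)%nat -> f k = C0) -> holo f.
Proof.
  intros Hf r Hr.
  destruct (finite_upper_bound (fun k => Cnorm (f k)) N) as [M [HM0 HM]].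
  exists M. intros k.
  assert (Hrk : 0 <= r ^ k <= 1) by (split; [apply pow_le; lra |
    rewrite <- (pow1 k); apply pow_incr; lra]).
  destruct (Nat.lt_ge_cases k N) as [Hk|Hk].
  - specialize (HM k Hk). pose proof (Cnorm_ge0 (f k)). simpl in HM. nra.
  - rewrite Hf, Cnorm_C0 by exact Hk. lra.
Qed.

Lemma holo_odd_span (j : nat) (c : nat -> Cplx) : holo (lincomb j c odd_monomial).
Proof.
  apply (holo_of_finite_support _ (2 * j)). intros k Hk.
  apply Csum_eq0. intros l Hl. unfold odd_monomial, monomial.
  destruct (Nat.eqb_spec k (2 * l + 1)); [lia | ring].
Qed.

Definition shift (N : nat) (f : series) : series := fun k => f (k + N)%nat.

Lemma holo_shift (N : nat) (f : series) : holo f -> holo (shift N f).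
Proof.
  intros Hf r Hr. set (r' := (1 + r) / 2).
  destruct (Hf r' ltac:(unfold r'; lra)) as [M HM].
  assert (HrN : 0 < r' ^ N) by (apply pow_lt; unfold r'; lra).
  exists (M / r' ^ N). intros k. unfold shift.
  specialize (HM (k + N)%nat). rewrite pow_add in HM.
  pose proof (Cnorm_ge0 (f (k + N)%nat)).
  assert (Cnorm (f (k + N)%nat) * r ^ k <= Cnorm (f (k + N)%nat) * r' ^ k)
    by (apply Rmult_le_compat_l; [assumption | apply pow_incr; unfold r'; lra]).
  apply Rle_trans with (Cnorm (f (k + N)%nat) * r' ^ k); [assumption|].
  apply Rmult_le_reg_r with (r' ^ N); [assumption|].
  replace (M / r' ^ N * r' ^ N) with M by (field; lra). rewrite Rmult_assoc. exact HM.
Qed.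

Lemma zpow_mul_shift (N : nat) (f : series) :
  vanishes_below f N -> f = zpow_mul N (shift N f).
Proof.
  intros H. apply functional_extensionality. intros k. unfold zpow_mul, shift.
  destruct (Nat.ltb_spec k N); [auto|]. f_equal. lia.
Qed.

(** * Subalgebras of finite codimension *)

Definition odd_below (j t : nat) : Prop := exists l, (l < j)%nat /\ t = (2 * l + 1)%nat.

Section Subalgebra.

Variable A : series -> Prop.
Hypothesis HA : unital_subalgebra A.

Lemma subalg_holo (f : series) : A f -> holo f.
Proof. apply HA. Qed.

Lemma subalg_one : A sone.
Proof. apply HA. Qed.

Lemma subalg_add (f g : series) : A f -> A g -> A (sadd f g).
Proof. apply HA. Qed.

Lemma subalg_scal (c : Cplx) (f : series) : A f -> A (sscal c f).
Proof. apply HA. Qed.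

Lemma subalg_mul (f g : series) : A f -> A g -> A (smul f g).
Proof. apply HA. Qed.

Lemma subalg_sub (f g : series) : A f -> A g -> A (ssub f g).
Proof.
  intros Af Ag.
  replace (ssub f g) with (sadd f (sscal (Copp C1) g)) by
    (apply functional_extensionality; intros k; unfold sadd, ssub, sscal; ring).
  apply subalg_add; [|apply subalg_scal]; assumption.
Qed.

Lemma subalg_zero : A (fun _ => C0).
Proof.
  replace (fun _ : nat => C0) with (sscal C0 sone) by
    (apply functional_extensionality; intros k; unfold sscal; ring).
  apply subalg_scal, subalg_one.
Qed.

Lemma subalg_lincomb (d : nat) (c : nat -> Cplx) (g : nat -> series) :
  (forall i, (i < d)%nat -> A (g i)) -> A (lincomb d c g).
Proof.
  induction d as [|d IH]; intros Hg; [exact subalg_zero|].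
  change (lincomb (S d) c g) with (sadd (lincomb d c g) (sscal (c d) (g d))).
  apply subalg_add; [apply IH; auto | apply subalg_scal, Hg; lia].
Qed.

Lemma subalg_spow (f : series) (a : nat) : A f -> A (spow f a).
Proof.
  intros Af. induction a as [|a IH]; [exact subalg_one | exact (subalg_mul _ _ Af IH)].
Qed.

Lemma codim_le_spanning (d j : nat) (b : nat -> series) : has_codim A d ->
  (forall f, holo f -> exists c, A (ssub f (lincomb j c b))) -> (d <= j)%nat.
Proof.
  intros [g [Hg [_ Hind]]] Hspan.
  destruct (Nat.le_gt_cases d j) as [|Hjd]; [assumption | exfalso].
  assert (Hcoef : forall i, exists ci, (i < d)%nat -> A (ssub (g i) (lincomb j ci b))).
  { intros i. destruct (Nat.lt_ge_cases i d) as [Hi|Hi].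
    - destruct (Hspan (g i) (Hg i Hi)) as [ci Hci]. exists ci. intros _. exact Hci.
    - exists (fun _ => C0). intros; lia. }
  apply functional_choice in Hcoef as [coef Hcoef].
  destruct (homogeneous_system_nontrivial d (map (fun l i => coef i l) (seq 0 j)))
    as [c [[i1 [Hi1 Hc1]] Hc]].
  { rewrite length_map, length_seq. exact Hjd. }
  apply Hc1, (Hind c); [|exact Hi1].
  replace (lincomb d c g) with (lincomb d c (fun i => ssub (g i) (lincomb j (coef i) b))).
  { apply subalg_lincomb. intros i Hi. exact (Hcoef i Hi). }
  apply functional_extensionality. intros k. unfold lincomb, ssub.
  assert (Hcancel : Csum d (fun i => Cmul (c i) (Csum j (fun l => Cmul (coef i l) (b l k))))
                    = C0).
  { rewrite (Csum_ext d _ (fun i => Csum j (fun l => Cmul (b l k) (Cmul (c i) (coef i l))))).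
    2:{ intros i _. rewrite <- Csum_scal. apply Csum_ext. intros l _. ring. }
    rewrite Csum_swap. apply Csum_eq0. intros l Hl.
    rewrite Csum_scal, (Hc (fun i => coef i l)); [ring|].
    apply (in_map (fun l i => coef i l)), in_seq. lia. }
  rewrite (Csum_ext d _ (fun i => Cadd (Cmul (c i) (g i k))
       (Cmul (Copp C1) (Cmul (c i) (Csum j (fun l => Cmul (coef i l) (b l k))))))).
  2:{ intros i _. ring. }
  rewrite Csum_add, Csum_scal, Hcancel. ring.
Qed.

Lemma monic_orders_outside_odd_below (pi e : series) (j : nat) :
  A pi -> monic_of_order pi 2 -> A e -> monic_of_order e (2 * j + 1) ->
  forall t, ~ odd_below j t -> exists u, A u /\ monic_of_order u t.
Proof.
  intros Api Hpi Ae He t Ht.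
  destruct (Nat.Even_or_Odd t) as [[a ->]|[a ->]].
  - exists (spow pi a). split; [apply subalg_spow; assumption | exact (spow_monic pi 2 a Hpi)].
  - assert (Hja : (j <= a)%nat).
    { apply Nat.nlt_ge. intros Haj. apply Ht. exists a. split; [exact Haj | reflexivity]. }
    exists (smul (spow pi (a - j)) e).
    split; [apply subalg_mul; [apply subalg_spow|]; assumption|].
    replace (2 * a + 1)%nat with (2 * (a - j) + (2 * j + 1))%nat by lia.
    exact (smul_monic _ _ _ _ (spow_monic pi 2 (a - j) Hpi) He).
Qed.

Lemma congruent_to_odd_span (j m : nat) :
  (forall h, holo h -> A (zpow_mul m h)) ->
  (forall t, ~ odd_below j t -> exists u, A u /\ monic_of_order u t) ->
  forall g, holo g -> exists c, A (ssub g (lincomb j c odd_monomial)).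
Proof.
  intros Hm Hmonic g Hg.
  assert (Hreduce : forall t, exists c a, A a /\
            vanishes_below (ssub g (sadd a (lincomb j c odd_monomial))) t).
  { induction t as [|t [c [a [Aa Hr]]]].
    - exists (fun _ => C0), (fun _ => C0). split; [exact subalg_zero | intros i Hi; lia].
    - set (r := ssub g (sadd a (lincomb j c odd_monomial))) in Hr.
      destruct (classic (odd_below j t)) as [[l [Hl ->]]|Hodd].
      + exists (fun x => if Nat.eqb x l then Cadd (c l) (r (2 * l + 1)%nat) else c x), a.
        split; [exact Aa|]. rewrite lincomb_update by exact Hl.
        apply (vanishes_below_cancel r (odd_monomial l)); [exact Hr | apply monomial_monic|].
        intros k. unfold r, ssub, sadd, sscal. ring.
      + destruct (Hmonic t Hodd) as [u [Au Hu]].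
        exists c, (sadd a (sscal (r t) u)).
        split; [apply subalg_add; [|apply subalg_scal]; assumption|].
        apply (vanishes_below_cancel r u); [exact Hr | exact Hu|].
        intros k. unfold r, ssub, sadd, sscal. ring. }
  destruct (Hreduce m) as [c [a [Aa Hr]]]. exists c.
  set (r := ssub g (sadd a (lincomb j c odd_monomial))) in Hr.
  assert (Ar : A r).
  { rewrite (zpow_mul_shift m r Hr). apply Hm, holo_shift. unfold r.
    apply holo_ssub, holo_sadd; [assumption | apply subalg_holo; assumption |
                                apply holo_odd_span]. }
  replace (ssub g (lincomb j c odd_monomial)) with (sadd r a)
    by (apply functional_extensionality; intros k; unfold r, sadd, ssub; ring).
  apply subalg_add; assumption.
Qed.

Lemma odd_coef_vanishes (n m j : nat) (pi f : series) :
  (forall h, holo h -> A (zpow_mul m h)) -> has_codim A (S n) ->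
  A pi -> monic_of_order pi 2 -> A f -> (j <= n)%nat ->
  vanishes_below f (2 * j + 1) -> f (2 * j + 1)%nat = C0.
Proof.
  intros Hm Hcod Api Hpi Af Hjn Hf. apply NNPP. intros Hne.
  set (e := sscal (Cinv (f (2 * j + 1)%nat)) f).
  assert (He : monic_of_order e (2 * j + 1)).
  { split.
    - intros i Hi. unfold e, sscal. rewrite (Hf i Hi). ring.
    - exact (Cinv_l _ Hne). }
  pose proof (codim_le_spanning _ _ _ Hcod (congruent_to_odd_span j m Hm
    (monic_orders_outside_odd_below pi e j Api Hpi (subalg_scal _ _ Af) He))).
  lia.
Qed.

(** * Primitives *)

Lemma simple_coef1_eq0 (f : series) : is_simple A -> A f -> f 1%nat = C0.
Proof.
  intros [Hc _] Af. specialize (Hc f Af 1%nat ltac:(lia)).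
  unfold deriv0 in Hc. simpl in Hc. destruct (f 1%nat).
  injection Hc. intros. unfold C0. f_equal; lra.
Qed.

Lemma primitive_iff_monic (p : series) : is_simple A ->
  is_primitive A p <-> A p /\ monic_of_order p 2.
Proof.
  intros Hs.
  assert (Hderiv : deriv0 p 2 = RtoC 2 <-> p 2%nat = C1).
  { unfold deriv0, RtoC, Cmul, C1. simpl. destruct (p 2%nat) as [x y]. simpl.
    split; intros E; injection E; intros; subst; f_equal; lra. }
  split.
  - intros (Ap & Hp0 & Hp2). split; [exact Ap|]. split; [|apply Hderiv; exact Hp2].
    intros i Hi. destruct i as [|[|]]; [exact Hp0 | exact (simple_coef1_eq0 p Hs Ap) | lia].
  - intros (Ap & Hp & Hp2). split; [|split]; [exact Ap | apply Hp; lia | apply Hderiv, Hp2].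
Qed.

Lemma simple_monic_of_order2 : is_simple A -> exists p, A p /\ monic_of_order p 2.
Proof.
  intros Hs. pose proof Hs as [Hc1 Hmax].
  assert (Hf : exists f, A f /\ f 2%nat <> C0).
  { apply NNPP. intros Hnone. assert (2 <= 1)%nat; [|lia].
    apply Hmax. intros f Af jj Hjj.
    destruct (Nat.eq_dec jj 1) as [->|]; [apply Hc1; [exact Af | lia]|].
    replace jj with 2%nat by lia. unfold deriv0.
    replace (f 2%nat) with C0; [ring|].
    apply NNPP. intros Hne. apply Hnone. exists f. auto. }
  destruct Hf as [f [Af Hf2]].
  exists (sscal (Cinv (f 2%nat)) (ssub f (sscal (f 0%nat) sone))). split.
  - apply subalg_scal, subalg_sub, subalg_scal, subalg_one; exact Af.
  - unfold sscal, ssub, sone. split.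
    + intros i Hi. destruct i as [|[|]]; [ring | rewrite (simple_coef1_eq0 f Hs Af); ring | lia].
    + rewrite <- (Cinv_l (f 2%nat) Hf2). ring.
Qed.

Definition even_gaps (n : nat) (p : series) : Prop :=
  forall k, (2 <= k <= n)%nat -> p (2 * k)%nat = C0.

Lemma exists_monic_even_gaps (n : nat) : is_simple A ->
  exists p, A p /\ monic_of_order p 2 /\ even_gaps n p.
Proof.
  intros Hs. induction n as [|n [p (Ap & Hp & Hgap)]].
  - destruct (simple_monic_of_order2 Hs) as [p [Ap Hp]].
    exists p. split; [exact Ap|]. split; [exact Hp|]. intros k Hk; lia.
  - destruct (Nat.le_gt_cases (S n) 1) as [Hn|Hn].
    { exists p. split; [exact Ap|]. split; [exact Hp|]. intros k Hk; lia. }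
    set (c := p (2 * S n)%nat).
    pose proof (spow_monic p 2 (S n) Hp) as [Hlow Hlead].
    assert (Hkeep : forall i, (i < 2 * S n)%nat ->
                      ssub p (sscal c (spow p (S n))) i = p i).
    { intros i Hi. unfold ssub, sscal. rewrite (Hlow i Hi). ring. }
    exists (ssub p (sscal c (spow p (S n)))). split; [|split].
    + apply subalg_sub, subalg_scal, subalg_spow; assumption.
    + split; [intros i Hi|]; rewrite Hkeep by lia; apply Hp; lia.
    + intros k Hk. destruct (Nat.eq_dec k (S n)) as [->|Hne].
      * unfold ssub, sscal. rewrite Hlead. unfold c. ring.
      * rewrite Hkeep by lia. apply Hgap. lia.
Qed.

End Subalgebra.

Lemma primitive_difference_vanishes (n : nat) (A : series -> Prop) (p chi : series) :
  cusp_algebra A -> has_codim A (S n) ->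
  A p -> monic_of_order p 2 -> A chi -> monic_of_order chi 2 ->
  even_gaps n p -> even_gaps n chi -> vanishes_below (ssub chi p) (2 * n + 2).
Proof.
  intros [HA [_ [m [_ Hm]]]] Hcod Ap [Hp0 Hp2] Achi [Hc0 Hc2] Hgp Hgc.
  apply vanishes_below_ind. intros i Hi Hbelow.
  destruct (Nat.Even_or_Odd i) as [[a ->]|[a ->]].
  - unfold ssub. destruct a as [|[|a]].
    + rewrite Hp0, Hc0 by lia. ring.
    + simpl. rewrite Hp2, Hc2. ring.
    + rewrite Hgp, Hgc by lia. ring.
  - apply (odd_coef_vanishes A HA n m a p (ssub chi p) Hm Hcod Ap);
      [split; assumption | apply subalg_sub; assumption | lia | exact Hbelow].
Qed.

Theorem lemma4p3 (n : nat) (A : series -> Prop) :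
  (1 <= n)%nat -> cusp_algebra A -> is_simple A -> has_codim A (S n) ->
  (exists p : series, is_primitive A p /\
     forall k : nat, (2 <= k <= n)%nat -> p (2 * k)%nat = C0) /\
  (forall p chi : series,
     is_primitive A p -> is_primitive A chi ->
     (forall k : nat, (2 <= k <= n)%nat -> p (2 * k)%nat = C0) ->
     (forall k : nat, (2 <= k <= n)%nat -> chi (2 * k)%nat = C0) ->
     exists h : series, holo h /\ ssub chi p = zpow_mul (2 * n + 2) h).
Proof.
  intros _ Hcusp Hs Hcod. pose proof Hcusp as [HA _]. split.
  - destruct (exists_monic_even_gaps A HA n Hs) as [p (Ap & Hp & Hgap)].
    exists p. split; [apply primitive_iff_monic; auto | exact Hgap].
  - intros p chi Hprim_p Hprim_chi Hgp Hgc.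
    apply (primitive_iff_monic A p Hs) in Hprim_p as [Ap Hp].
    apply (primitive_iff_monic A chi Hs) in Hprim_chi as [Achi Hchi].
    exists (shift (2 * n + 2) (ssub chi p)). split.
    + apply holo_shift, (subalg_holo A HA), (subalg_sub A HA); assumption.
    + apply zpow_mul_shift, (primitive_difference_vanishes n A); assumption.
Qed.
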